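(* Let $G$ be a connected (finite, simple) graph, $\mathcal{F}$ a maximum induced forest of $G$, $S=V(G)\setminus V(\mathcal{F})$, $H$ the contracted graph, and $B$ a skeleton of $H$ with the maximum possible number of 2-edges among all skeletons (all as defined in the context). Let $L_S$ be the set of vertices of $S$ that are leaves of $B$ and let $B_1=B[V(B)\setminus L_S]$ (the inner skeleton). Then every leaf of $B_1$ is a tree vertex.
   Context: A maximum induced forest of $G$ is an induced forest of $G$ with the maximum number of vertices. Let $\mathcal{T}$ be the set of connected components (trees) of $\mathcal{F}$ and $S=V(G)\setminus V(\mathcal{F})$. The graph $H$ has vertex set $\{x_T : T\in\mathcal{T}\}\cup S$ (the $x_T$ are called tree vertices, the vertices of $S$ non-tree vertices) and edge set consisting of all edges of $G[S]$ together with all pairs $ux_T$ with $u\in S$, $T\in\mathcal{T}$ such that $u$ has at least one neighbor in $V(T)$ in $G$. An edge $ux_T$ of $H$ is a 2-edge if $u$ has at least two neighbors in $V(T)$ in $G$; all other edges of $H$ (including all edges with both endpoints in $S$) are 1-edges. A skeleton is a spanning tree of $H$ rooted at some tree vertex, with all edges directed towards the root (an in-arborescence). A leaf is a vertex of total degree 1. *)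

From mathcomp Require Import all_boot.
Set Implicit Arguments. Unset Strict Implicit. Unset Printing Implicit Defensive.

(* A finite simple graph: vertex type T : finType, adjacency e : rel T,
   assumed symmetric and irreflexive (hypotheses of the theorem). *)
Section Graph.
Variables (T : finType) (e : rel T).

Definition graph_connected : Prop := forall x y : T, connect e x y.

Definition has_cycle_in (F : {set T}) : Prop :=
  exists s : seq T, [/\ uniq s, 3 <= size s, all (fun x => x \in F) s & cycle e s].

Definition induced_forest (F : {set T}) : Prop := ~ has_cycle_in F.

Definition max_induced_forest (F : {set T}) : Prop :=
  induced_forest F /\ forall F' : {set T}, induced_forest F' -> #|F'| <= #|F|.

Definition erestr (F : {set T}) : rel T :=
  [rel x y | [&& e x y, x \in F & y \in F]].

Definition comp (F : {set T}) (v : T) : {set T} :=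
  [set w in F | connect (erestr F) v w].

(* the trees of the forest, as vertex sets; these are the tree vertices x_T *)
Definition trees (F : {set T}) : {set {set T}} := [set comp F v | v in F].

(* non-tree vertices u in S = V(G) \ F, represented as singletons [set u] *)
Definition nontree (F : {set T}) : {set {set T}} := [set [set u] | u in ~: F].

Definition HV (F : {set T}) : {set {set T}} := trees F :|: nontree F.

Definition ut_edge (F : {set T}) (k : nat) (X Y : {set T}) : bool :=
  [exists u, [&& u \notin F, X == [set u], Y \in trees F &
                 k <= #|[set w in Y | e u w]| ]].

Definition Hadj (F : {set T}) (X Y : {set T}) : bool :=
  [|| [exists u, exists v, [&& u \notin F, v \notin F, X == [set u],
                               Y == [set v] & e u v]],
      ut_edge F 1 X Y | ut_edge F 1 Y X].

Definition two_edge (F : {set T}) (X Y : {set T}) : bool :=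
  ut_edge F 2 X Y || ut_edge F 2 Y X.

(* B is a skeleton of H rooted at r: a spanning in-arborescence of H
   (given as a set of arcs (child, parent)) rooted at the tree vertex r. *)
Definition skeleton (F : {set T}) (B : {set {set T} * {set T}}) (r : {set T})
  : Prop :=
  [/\ r \in trees F,
      forall a, a \in B -> [/\ a.1 \in HV F, a.2 \in HV F & Hadj F a.1 a.2],
      forall X, X \in HV F -> X != r ->
         #|[set a in B | a.1 == X]| = 1,
      #|[set a in B | a.1 == r]| = 0 &
      forall X, X \in HV F -> connect [rel P Q | (P, Q) \in B] X r].

Definition num_two_edges (F : {set T}) (B : {set {set T} * {set T}}) : nat :=
  #|[set a in B | two_edge F a.1 a.2]|.

Definition deg_in (B : {set {set T} * {set T}}) (W : {set {set T}})
  (X : {set T}) : nat :=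
  #|[set a in B | [&& (a.1 == X) || (a.2 == X), a.1 \in W & a.2 \in W]]|.

Definition LS (F : {set T}) (B : {set {set T} * {set T}}) : {set {set T}} :=
  [set X in nontree F | deg_in B (HV F) X == 1].

End Graph.

From Pilot Require Import Defs.
From mathcomp Require Import all_boot.
From Stdlib Require Import Classical.

(* Suppose a non-tree vertex X were a leaf of the inner skeleton B1. Not being
   a leaf of B, X has a B-neighbour Y in L_S. Y is not the parent of X, since
   the non-root leaf Y already has its own parent arc; so Y is a child of X.
   But the parent of a non-tree leaf Y = {w} of a skeleton with the maximum
   number of 2-edges is always a tree vertex: by maximality of F, G[F + w]
   has a cycle through w, and the two neighbours of w on it lie in one tree T
   of F, so w x_T is a 2-edge. If the parent of Y were a non-tree vertex, the
   arc out of Y would be a 1-edge, and re-hanging the leaf Y under x_T would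
   give a skeleton with more 2-edges. *)

Section ContractedGraph.
Set Implicit Arguments.
Unset Strict Implicit.

Variables (T : finType) (e : rel T) (F : {set T}).
Implicit Types (X Y Z : {set T}) (B : {set {set T} * {set T}}).

Definition rehang B Y X Z : {set {set T} * {set T}} :=
  (Y, Z) |: (B :\ (Y, X)).

Lemma deg_in_ltn_exists B (W W' : {set {set T}}) X :
  deg_in B W X < deg_in B W' X ->
  exists2 a, a \in B &
    [/\ (a.1 == X) || (a.2 == X), a.1 \in W', a.2 \in W'
      & (a.1 \notin W) || (a.2 \notin W)].
Proof.
rewrite /deg_in ltnNge => lt_deg.
have /subsetPn[a] : ~~ ([set a in B | [&& (a.1 == X) || (a.2 == X),
                                         a.1 \in W' & a.2 \in W']]
                       \subset [set a in B | [&& (a.1 == X) || (a.2 == X),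
                                                 a.1 \in W & a.2 \in W]]).
  by apply: contra lt_deg => /subset_leq_card.
rewrite !inE => /and4P[aB aX a1W' a2W'].
by rewrite aB aX /= negb_and => aW; exists a.
Qed.

Lemma nontree_notin_trees X : X \in nontree F -> X \notin trees e F.
Proof.
case/imsetP=> u; rewrite inE => uF ->; apply/imsetP => -[v vF].
move/setP/(_ v); rewrite !inE vF connect0 => /eqP vu.
by rewrite -vu vF in uF.
Qed.

Lemma ut_edge_tree k X Y : ut_edge e F k X Y -> Y \in trees e F.
Proof. by case/existsP=> u /and4P[]. Qed.

Lemma ut_edge_leq k l X Y : k <= l -> ut_edge e F l X Y -> ut_edge e F k X Y.
Proof.
move=> kl /existsP[u /and4P[uF Xu YT lY]]; apply/existsP; exists u.
by rewrite uF Xu YT (leq_trans kl lY).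
Qed.

Lemma two_edge_tree X Y :
  two_edge e F X Y -> (X \in trees e F) || (Y \in trees e F).
Proof. by case/orP=> /ut_edge_tree ->; rewrite ?orbT. Qed.

Lemma num_two_edges_rehang B Y X Z :
  ~~ two_edge e F Y X -> two_edge e F Y Z -> (Y, Z) \notin B ->
  num_two_edges e F (rehang B Y X Z) = (num_two_edges e F B).+1.
Proof.
move=> YX2 YZ2 YZB; rewrite /num_two_edges.
have -> : [set a in rehang B Y X Z | two_edge e F a.1 a.2] =
          (Y, Z) |: [set a in B | two_edge e F a.1 a.2].
  apply/setP => a; rewrite !inE.
  case: (eqVneq a (Y, Z)) => [->|_] //=; case: (eqVneq a (Y, X)) => [->|] //=.
  by rewrite (negbTE YX2) andbF.
by rewrite cardsU1 inE (negbTE YZB).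
Qed.

Section Skeleton.
Variables (B : {set {set T} * {set T}}) (r : {set T}).
Hypothesis HB : skeleton e F B r.

Lemma skeleton_out_arc X : X \in HV e F -> X != r -> exists Z, (X, Z) \in B.
Proof.
case: HB => _ _ hout _ _ XH Xr; have /eqP/cards1P[a Da] := hout X XH Xr.
have : a \in [set a in B | a.1 == X] by rewrite Da set11.
by rewrite inE => /andP[aB /eqP aX]; exists a.2; rewrite -aX -surjective_pairing.
Qed.

Lemma skeleton_arc_tail_neq_root X Z : (X, Z) \in B -> X != r.
Proof.
case: HB => _ _ _ /cards0_eq hroot _ XZB; apply/eqP => Xr.
by have := in_set0 (X, Z); rewrite -hroot inE XZB Xr eqxx.
Qed.

Lemma skeleton_nontree_neq_root X : X \in nontree F -> X != r.
Proof. by move/nontree_notin_trees; apply: contraNneq => ->; case: HB. Qed.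

Lemma skeleton_deg_in_gt0 X : X \in HV e F -> X != r -> 0 < deg_in B (HV e F) X.
Proof.
move=> XH Xr; have [Z XZB] := skeleton_out_arc XH Xr.
case: HB => _ harc _ _ _; have [_ ZH _] := harc _ XZB.
by apply/card_gt0P; exists (X, Z); rewrite inE XZB eqxx XH ZH.
Qed.

Lemma leaf_arcE Y Z a :
  deg_in B (HV e F) Y = 1 -> (Y, Z) \in B -> a \in B ->
  (a.1 == Y) || (a.2 == Y) -> a = (Y, Z).
Proof.
case: HB => _ harc _ _ _ /eqP/cards1P[a0 Da0] YZB aB aY.
have arcY b : b \in B -> (b.1 == Y) || (b.2 == Y) -> b = a0.
  move=> bB bY; have [b1H b2H _] := harc _ bB.
  by apply/set1P; rewrite -Da0 inE bB bY b1H b2H.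
by rewrite (arcY _ aB aY) (arcY _ YZB) ?eqxx.
Qed.

Lemma leaf_out_arcE Y Z V :
  deg_in B (HV e F) Y = 1 -> (Y, Z) \in B -> (Y, V) \in B -> V = Z.
Proof.
move=> degY YZB YVB; have /= := leaf_arcE degY YZB YVB.
by rewrite eqxx => /(_ isT)[].
Qed.

Lemma leaf_in_arcE Y Z W :
  deg_in B (HV e F) Y = 1 -> (Y, Z) \in B -> (W, Y) \in B -> W = Y.
Proof.
move=> degY YZB WYB; have /= := leaf_arcE degY YZB WYB.
by rewrite eqxx orbT => /(_ isT)[].
Qed.

Lemma nonroot_leaf_childE X Y :
  deg_in B (HV e F) Y = 1 -> Y \in HV e F -> Y != r -> (X, Y) \in B -> X = Y.
Proof.
move=> degY YH Yr; have [Z YZB] := skeleton_out_arc YH Yr.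
exact: leaf_in_arcE degY YZB.
Qed.

Section Rehang.
Variables (Y X Z : {set T}).
Hypotheses (degY : deg_in B (HV e F) Y = 1) (YXB : (Y, X) \in B).
Hypotheses (ZH : Z \in HV e F) (ZY : Z != Y) (YZadj : Hadj e F Y Z).

Let B' := rehang B Y X Z.

Lemma rehang_out_arcs W :
  [set a in B' | a.1 == W] =
  if W == Y then [set (Y, Z)] else [set a in B | a.1 == W].
Proof.
case: (eqVneq W Y) => [->|WY]; apply/setP => -[a1 a2]; rewrite !inE /= !xpair_eqE.
  case: (eqVneq a1 Y) => [->|]; rewrite ?andbF //= !andbT.
  case: (eqVneq a2 Z) => //= _; apply/negP => /andP[a2X YaB].
  by rewrite (leaf_out_arcE degY YXB YaB) eqxx in a2X.
by case: (eqVneq a1 W) => [->|]; rewrite ?andbF // (negbTE WY).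
Qed.

Lemma path_rehang W p :
  W != Y -> path [rel P Q | (P, Q) \in B] W p ->
  path [rel P Q | (P, Q) \in B'] W p.
Proof.
elim: p W => //= V p IHp W WY /andP[WVB pV].
have VY : V != Y.
  apply: contraNneq WY => VY; rewrite VY in WVB.
  by rewrite (leaf_in_arcE degY YXB WVB).
by rewrite IHp // !inE WVB !xpair_eqE (negbTE WY) orbT.
Qed.

Lemma skeleton_rehang : skeleton e F B' r.
Proof.
have HB0 := HB; case: HB0 => rT harc hout hroot hconn.
have [/= YH _ _] := harc _ YXB; have Yr := skeleton_arc_tail_neq_root YXB.
have connB' W : W \in HV e F -> W != Y -> connect [rel P Q | (P, Q) \in B'] W r.
  move=> WH WY; have /connectP[p pB ->] := hconn W WH.
  by apply/connectP; exists p; first exact: path_rehang.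
split=> //.
- move=> a; rewrite in_setU1 in_setD1 => /orP[/eqP-> /=|/andP[_ aB]].
    by rewrite YH ZH YZadj.
  exact: harc.
- move=> W WH Wr; rewrite rehang_out_arcs.
  by case: eqP => _; [exact: cards1 | exact: hout].
- by rewrite rehang_out_arcs eq_sym (negbTE Yr).
- move=> W WH; case: (eqVneq W Y) => [->|WY]; last exact: connB'.
  by apply: connect_trans (connB' Z ZH ZY); apply: connect1; rewrite /= !inE eqxx.
Qed.

End Rehang.
End Skeleton.

(* [Defs.comp] is qualified because [comp] alone is ssrfun's composition. *)
Lemma cycle_through_vertex w :
  induced_forest e F -> has_cycle_in e (w |: F) ->
  exists a b, [/\ a \in F, b \in Defs.comp e F a, a != b, e w a & e b w].
Proof.
move=> acyclic [s [s_uniq s_size sF s_cycle]].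
have ws : w \in s.
  apply: contraT => ws; case: acyclic; exists s; split=> //.
  apply/allP => x xs; have := allP sF x xs; rewrite in_setU1.
  by case/predU1P=> [xw|//]; rewrite -xw xs in ws.
case: (rot_to ws) => i t rot_s.
have wt_cycle : cycle e (w :: t) by rewrite -rot_s rot_cycle.
have wt_uniq : uniq (w :: t) by rewrite -rot_s rot_uniq.
have t_size : 2 <= size t.
  by rewrite -ltnS -[(size t).+1]/(size (w :: t)) -rot_s size_rot.
have tF : all [in F] t.
  apply/allP => x xt; have xs : x \in s by rewrite -(mem_rot i) rot_s inE xt orbT.
  have := allP sF x xs; rewrite in_setU1; case/predU1P=> [xw|//].
  by move: wt_uniq; rewrite /= -xw xt.
move: t_size wt_cycle wt_uniq tF; case: t {rot_s} => [|a [|c q]] // _.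
rewrite [cycle _ _]/= rcons_path => /and4P[wa ac cq bw] /and3P[_ a_cq _] acqF.
have /andP[aF cqF] : (a \in F) && all [in F] (c :: q) := acqF.
have bF := allP cqF _ (mem_last c q).
exists a, (last c q); split=> //.
- rewrite inE bF; apply/connectP; exists (c :: q) => //.
  apply: (@sub_in_path _ [in F] e) acqF _; last by rewrite /= ac cq.
  by move=> x y xF yF exy; rewrite /erestr /= exy xF yF.
- by apply: contraNneq a_cq => ->; exact: mem_last.
Qed.

Lemma ut_edge2_of_neighbours w a b :
  w \notin F -> a \in F -> b \in Defs.comp e F a -> a != b -> e w a -> e w b ->
  ut_edge e F 2 [set w] (Defs.comp e F a).
Proof.
move=> wF aF bT ab wa wb; apply/existsP; exists w.
rewrite wF eqxx imset_f //=.
have <- : #|[set a; b]| = 2 by rewrite cards2 ab.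
apply/subset_leq_card/subsetP => x.
rewrite !inE => /orP[]/eqP->; rewrite ?aF ?connect0 ?wa ?wb //.
by rewrite andbT; move: bT; rewrite inE.
Qed.

Section MaxForest.
Hypotheses (e_sym : symmetric e) (HF : max_induced_forest e F).

Lemma has_cycle_in_setU1 w : w \notin F -> has_cycle_in e (w |: F).
Proof.
move=> wF; apply: NNPP => acyclic.
by have := HF.2 _ acyclic; rewrite cardsU1 wF ltnn.
Qed.

Lemma exists_ut_edge2_tree w :
  w \notin F -> exists2 Tt, Tt \in trees e F & ut_edge e F 2 [set w] Tt.
Proof.
move=> wF; have [a [b [aF bT ab wa bw]]] :=
  cycle_through_vertex HF.1 (has_cycle_in_setU1 wF).
exists (Defs.comp e F a); first exact: imset_f.
by apply: ut_edge2_of_neighbours bT ab wa _; rewrite // e_sym.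
Qed.

Variables (B : {set {set T} * {set T}}) (r : {set T}).
Hypothesis HB : skeleton e F B r.
Hypothesis Bmax : forall (B' : {set {set T} * {set T}}) (r' : {set T}),
  skeleton e F B' r' -> num_two_edges e F B' <= num_two_edges e F B.

Lemma nontree_leaf_parent_tree Y X :
  Y \in nontree F -> deg_in B (HV e F) Y = 1 -> (Y, X) \in B ->
  X \in trees e F.
Proof.
move=> Ynt degY YXB; apply: contraT => XnT.
have YnT := nontree_notin_trees Ynt.
have [w wF Yw] : exists2 w, w \notin F & Y = [set w].
  by case/imsetP: Ynt => w; rewrite inE; exists w.
have [Tt TtT YTt] := exists_ut_edge2_tree wF; rewrite -Yw in YTt.
have TtH : Tt \in HV e F by rewrite inE TtT.
have TtY : Tt != Y by apply: contraNneq YnT => <-.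
have YTt_adj : Hadj e F Y Tt by rewrite /Hadj (ut_edge_leq _ YTt) ?orbT.
have := Bmax (skeleton_rehang HB degY YXB TtH TtY YTt_adj).
rewrite num_two_edges_rehang ?ltnn //.
- by apply/negP => /two_edge_tree; rewrite (negbTE YnT) (negbTE XnT).
- by rewrite /two_edge YTt.
- by apply: contra XnT => YTtB; rewrite -(leaf_out_arcE HB degY YXB YTtB).
Qed.

End MaxForest.
End ContractedGraph.

Theorem corollary3 (T : finType) (e : rel T)
  (e_sym : symmetric e) (e_irr : irreflexive e)
  (Gconn : graph_connected e)
  (F : {set T}) (HF : max_induced_forest e F)
  (B : {set {set T} * {set T}}) (r : {set T})
  (HB : skeleton e F B r)
  (Bmax : forall (B' : {set {set T} * {set T}}) (r' : {set T}),
            skeleton e F B' r' -> num_two_edges e F B' <= num_two_edges e F B) :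
  forall X : {set T}, X \in HV e F :\: LS e F B ->
    deg_in B (HV e F :\: LS e F B) X = 1 -> X \in trees e F.
Proof.
set W := HV e F :\: LS e F B; move=> X XW degX; apply: contraT => XnT.
have /setDP[XH XnLS] := XW.
have Xnt : X \in nontree F by move: XH; rewrite inE (negbTE XnT).
have inLS Y : Y \in HV e F -> Y \notin W ->
    Y \in nontree F /\ deg_in B (HV e F) Y = 1.
  by move=> YH; rewrite in_setD YH andbT negbK inE => /andP[-> /eqP].
have XnW : deg_in B W X < deg_in B (HV e F) X.
  have Xr := skeleton_nontree_neq_root HB Xnt.
  rewrite degX ltn_neqAle eq_sym (skeleton_deg_in_gt0 HB XH Xr) andbT.
  by apply: contra XnLS => /eqP deg1; rewrite inE Xnt deg1.
have [[Y Z] /= YZB [/orP[]/eqP YX YH ZH]] := deg_in_ltn_exists XnW.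
- rewrite YX XW /= => ZnW; have [Znt degZ] := inLS Z ZH ZnW.
  have YZ := nonroot_leaf_childE HB degZ ZH (skeleton_nontree_neq_root HB Znt) YZB.
  by rewrite -YZ YX XW in ZnW.
- rewrite YX XW orbF => YnW; have [Ynt degY] := inLS Y YH YnW.
  by rewrite -YX (nontree_leaf_parent_tree e_sym HF HB Bmax Ynt degY YZB) in XnT.
Qed.
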